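(* In the one-shot wage theft problem described in the context, suppose $C'(0)<Py_H-Py_L$ and let $a^*$ be an optimal effort level (a maximizer of $g$ on $[0,1)$). Then every optimal solution of the problem with effort level $a^*$ has promised wages $w_i^*(a^* )$ and wage thefts $b_i^*(a^* )$, $i\in\{H,L\}$; i.e. these are the unique optimal wages and wage thefts.
   Context: Fix $P>0$, $y_H>y_L\ge 0$, a real number $u$ (reservation utility) and $\gamma\in(0,1]$ (inspection probability). Let $C:[0,1)\to\mathbb{R}$ be the worker's effort cost: $C(0)=0$, $C$ increasing, strictly convex, twice differentiable, $C(a)\to\infty$ as $a\to1$. Let $\eta:[0,\infty)\to\mathbb{R}$ be the penalty: strictly convex, increasing, twice differentiable, $\eta(0)=0$. The one-shot wage theft problem is: choose $a,w_H,w_L,b_H,b_L$ to maximize $a\,(Py_H-w_H+b_H-\gamma\eta(b_H))+(1-a)\,(Py_L-w_L+b_L-\gamma\eta(b_L))$ subject to $a\in\arg\max_{a'\in[0,1)}\{a'w_H+(1-a')w_L-C(a')\}$; $a w_H+(1-a)w_L-C(a)\ge u$; $w_H,w_L\ge0$; $0\le b_L\le w_L$, $0\le b_H\le w_H$; $a\in[0,1)$. Let $\beta\ge0$ satisfy $\gamma\eta'(\beta)=1$ (assumed to exist). For $a\in[0,1)$ define $w_L^*(a)=\max\{0,u-aC'(a)+C(a)\}$, $w_H^*(a)=w_L^*(a)+C'(a)$, $b_i^*(a)=\min\{\beta,w_i^*(a)\}$, and $g(a)=a\,(Py_H-w_H^*(a)+b_H^*(a)-\gamma\eta(b_H^*(a)))+(1-a)\,(Py_L-w_L^*(a)+b_L^*(a)-\gamma\eta(b_L^*(a)))$;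 optimal effort levels are the maximizers of $g$ on $[0,1)$. *)

From Stdlib Require Import Reals.
Open Scope R_scope.

(* f' is the derivative of f on the set D, taken within D
   (so one-sided at boundary points of D such as 0). *)
Definition is_deriv_on (f f' : R -> R) (D : R -> Prop) : Prop :=
  forall x, D x ->
    limit1_in (fun y => (f y - f x) / (y - x)) (fun y => D y /\ y <> x) (f' x) x.

Definition strictly_convex_on (f : R -> R) (D : R -> Prop) : Prop :=
  forall x y t, D x -> D y -> x <> y -> 0 < t < 1 ->
    f (t * x + (1 - t) * y) < t * f x + (1 - t) * f y.

Definition increasing_on (f : R -> R) (D : R -> Prop) : Prop :=
  forall x y, D x -> D y -> x <= y -> f x <= f y.

Definition unit_int (a : R) : Prop := 0 <= a < 1.
Definition nonneg_half_line (x : R) : Prop := 0 <= x.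

Definition tends_to_infty_at_1 (C : R -> R) : Prop :=
  forall M, exists d, 0 < d /\ forall a, unit_int a -> 1 - d < a -> M < C a.

Definition state_profit (P y gamma : R) (eta : R -> R) (w b : R) : R :=
  P * y - w + b - gamma * eta b.

Definition objective (P yH yL gamma : R) (eta : R -> R)
  (a wH wL bH bL : R) : R :=
  a * state_profit P yH gamma eta wH bH
  + (1 - a) * state_profit P yL gamma eta wL bL.

Definition worker_utility (C : R -> R) (wH wL a : R) : R :=
  a * wH + (1 - a) * wL - C a.

Definition feasible (u : R) (C : R -> R) (a wH wL bH bL : R) : Prop :=
  unit_int a /\
  (forall a', unit_int a' -> worker_utility C wH wL a' <= worker_utility C wH wL a) /\
  u <= worker_utility C wH wL a /\
  0 <= wH /\ 0 <= wL /\
  0 <= bL <= wL /\ 0 <= bH <= wH.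

Definition optimal_solution (P yH yL u gamma : R) (C eta : R -> R)
  (a wH wL bH bL : R) : Prop :=
  feasible u C a wH wL bH bL /\
  forall a' wH' wL' bH' bL', feasible u C a' wH' wL' bH' bL' ->
    objective P yH yL gamma eta a' wH' wL' bH' bL'
    <= objective P yH yL gamma eta a wH wL bH bL.

Definition wL_star (u : R) (C Cp : R -> R) (a : R) : R :=
  Rmax 0 (u - a * Cp a + C a).

Definition wH_star (u : R) (C Cp : R -> R) (a : R) : R :=
  wL_star u C Cp a + Cp a.

Definition b_star (beta w : R) : R := Rmin beta w.

Definition g_fun (P yH yL u gamma beta : R) (C Cp eta : R -> R) (a : R) : R :=
  objective P yH yL gamma eta a
    (wH_star u C Cp a) (wL_star u C Cp a)
    (b_star beta (wH_star u C Cp a)) (b_star beta (wL_star u C Cp a)).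

From Stdlib Require Import Reals Lra Psatz.
Open Scope R_scope.

(* With optimal theft, the firm's payoff in a state paying wage w is
   net_payoff w = h (min beta w) - w, where h b = b - gamma eta b is strictly
   concave with its maximum at beta; hence net_payoff is strictly decreasing
   and any theft other than min beta w is strictly worse.  If astar = 0 were
   optimal, a small effort a > 0 would raise g by at least
   a (P yH - P yL - C'(a)) > 0, as C' is continuous at 0; so 0 < astar < 1.
   Then incentive compatibility forces wH - wL = C'(astar), participation
   forces wL >= wL_star astar, and comparing with the feasible contract built
   from wH_star, wL_star and b_star shows that both state payoffs are
   maximal, which pins down wages and thefts. *)

Definition segment_closed (D : R -> Prop) : Prop :=
  forall x y t, D x -> D y -> 0 < t < 1 -> D (t * x + (1 - t) * y).

Lemma segment_closed_unit_int : segment_closed unit_int.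
Proof. intros x y t [] [] Ht; split; nra. Qed.

Lemma segment_closed_nonneg_half_line : segment_closed nonneg_half_line.
Proof. unfold nonneg_half_line; intros x y t Hx Hy Ht; nra. Qed.

Lemma limit1_in_le (f : R -> R) D l x K :
  limit1_in f D l x ->
  (forall d, 0 < d -> exists y, D y /\ Rabs (y - x) < d /\ f y <= K) -> l <= K.
Proof.
  intros Hl Hnear. destruct (Rle_or_lt l K) as [Hle | Hlt]; [exact Hle |].
  destruct (Hl (l - K)) as (alp & Halp & Hclose); [lra |].
  destruct (Hnear alp Halp) as (y & Dy & Hyx & Hfy).
  specialize (Hclose y (conj Dy Hyx)). simpl in Hclose. unfold Rdist in Hclose.
  apply Rabs_def2 in Hclose. lra.
Qed.

Lemma limit1_in_ge (f : R -> R) D l x K :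
  limit1_in f D l x ->
  (forall d, 0 < d -> exists y, D y /\ Rabs (y - x) < d /\ K <= f y) -> K <= l.
Proof.
  intros Hl Hnear. apply Ropp_le_cancel.
  apply (limit1_in_le _ D _ x _ (limit_Ropp f D l x Hl)).
  intros d Hd. destruct (Hnear d Hd) as (y & Dy & Hyx & Hfy).
  exists y; repeat split; auto; lra.
Qed.

Lemma segment_near x0 x d : x <> x0 -> 0 < d ->
  exists t, 0 < t < 1 /\ Rabs (t * x + (1 - t) * x0 - x0) < d.
Proof.
  intros Hne Hd.
  assert (Habs : 0 < Rabs (x - x0)) by (apply Rabs_pos_lt; lra).
  set (t := Rmin (1 / 2) (d / (2 * Rabs (x - x0)))).
  assert (Ht0 : 0 < t) by (apply Rmin_pos; [lra | apply Rdiv_lt_0_compat; lra]).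
  assert (Ht1 : t <= 1 / 2) by apply Rmin_l.
  assert (Htd : t <= d / (2 * Rabs (x - x0))) by apply Rmin_r.
  assert (Hd2 : d / (2 * Rabs (x - x0)) * Rabs (x - x0) = d / 2) by (field; lra).
  exists t; split; [lra |].
  replace (t * x + (1 - t) * x0 - x0) with (t * (x - x0)) by ring.
  rewrite Rabs_mult, (Rabs_right t) by lra. nra.
Qed.

Lemma is_deriv_on_continuous (f f' : R -> R) D x :
  is_deriv_on f f' D -> D x -> limit1_in f (fun y => D y /\ y <> x) (f x) x.
Proof.
  intros Hd Dx.
  assert (Hlin : limit1_in (fun y => (f y - f x) / (y - x) * (y - x) + f x)
                   (fun y => D y /\ y <> x) (f' x * (x - x) + f x) x).
  { apply limit_plus; [apply limit_mul | apply (limit_free f)].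
    - now apply Hd.
    - apply limit_minus; [apply lim_x | apply (limit_free (fun _ => x) _ x)]. }
  replace (f' x * (x - x) + f x) with (f x) in Hlin by ring.
  intros eps Heps. destruct (Hlin eps Heps) as (alp & Halp & Hclose).
  exists alp; split; [exact Halp |]. intros y [[Dy Hne] Hyx].
  specialize (Hclose y (conj (conj Dy Hne) Hyx)). simpl in Hclose |- *.
  replace ((f y - f x) / (y - x) * (y - x) + f x) with (f y) in Hclose by (field; lra).
  exact Hclose.
Qed.

Section Derivative.

Variables (f f' : R -> R) (D : R -> Prop).
Hypothesis D_segment : segment_closed D.
Hypothesis f_deriv : is_deriv_on f f' D.
Hypothesis f_convex : strictly_convex_on f D.

Lemma deriv_ge_of_secants_right x x2 K : D x -> D x2 -> x < x2 ->
  (forall y, D y -> x < y -> K * (y - x) <= f y - f x) -> K <= f' x.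
Proof.
  intros Dx Dx2 Hx Hsec.
  apply (limit1_in_ge _ _ _ x _ (f_deriv x Dx)). intros d Hd.
  destruct (segment_near x x2 d) as (t & Ht & Hnear); [lra | exact Hd |].
  set (y := t * x2 + (1 - t) * x) in *.
  assert (Dy : D y) by (apply D_segment; auto).
  assert (Hy : x < y) by (unfold y; nra).
  exists y; repeat split; auto; [lra |].
  set (q := (f y - f x) / (y - x)).
  assert (Hq : q * (y - x) = f y - f x) by (unfold q; field; lra).
  specialize (Hsec y Dy Hy). nra.
Qed.

Lemma deriv_le_of_secants_left x x1 K : D x -> D x1 -> x1 < x ->
  (forall y, D y -> y < x -> K * (y - x) <= f y - f x) -> f' x <= K.
Proof.
  intros Dx Dx1 Hx Hsec.
  apply (limit1_in_le _ _ _ x _ (f_deriv x Dx)). intros d Hd.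
  destruct (segment_near x x1 d) as (t & Ht & Hnear); [lra | exact Hd |].
  set (y := t * x1 + (1 - t) * x) in *.
  assert (Dy : D y) by (apply D_segment; auto).
  assert (Hy : y < x) by (unfold y; nra).
  exists y; repeat split; auto; [lra |].
  set (q := (f y - f x) / (y - x)).
  assert (Hq : q * (y - x) = f y - f x) by (unfold q; field; lra).
  specialize (Hsec y Dy Hy). nra.
Qed.

Lemma deriv_eq_of_supporting_line x x1 x2 K : D x -> D x1 -> D x2 -> x1 < x < x2 ->
  (forall y, D y -> f x + K * (y - x) <= f y) -> f' x = K.
Proof.
  intros Dx Dx1 Dx2 Hx Hsupp. apply Rle_antisym.
  - apply (deriv_le_of_secants_left x x1); auto; [lra |].
    intros y Dy _; specialize (Hsupp y Dy); lra.
  - apply (deriv_ge_of_secants_right x x2); auto; [lra |].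
    intros y Dy _; specialize (Hsupp y Dy); lra.
Qed.

Lemma strictly_convex_tangent_le x0 x : D x0 -> D x -> f x0 + f' x0 * (x - x0) <= f x.
Proof.
  intros Dx0 Dx. destruct (Req_dec x x0) as [-> | Hne]; [lra |].
  enough (f' x0 * (x - x0) <= f x - f x0) by lra.
  apply (limit1_in_le _ _ _ x0 _
           (limit_mul _ _ _ _ _ _ (f_deriv x0 Dx0) (limit_free (fun _ => x - x0) _ x0 x0))).
  intros d Hd. destruct (segment_near x0 x d Hne Hd) as (t & Ht & Hnear).
  set (y := t * x + (1 - t) * x0) in *.
  assert (Hy : y - x0 = t * (x - x0)) by (unfold y; ring).
  assert (Hyne : y - x0 <> 0) by (rewrite Hy; apply Rmult_integral_contrapositive; lra).
  exists y; repeat split; [apply D_segment; auto | lra | exact Hnear |].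
  set (q := (f y - f x0) / (y - x0)).
  assert (Hq : q * (y - x0) = f y - f x0) by (unfold q; field; exact Hyne).
  assert (Hc : f y < t * f x + (1 - t) * f x0) by (apply f_convex; auto).
  rewrite Hy in Hq. nra.
Qed.

Lemma strictly_convex_tangent_lt x0 x : D x0 -> D x -> x <> x0 ->
  f x0 + f' x0 * (x - x0) < f x.
Proof.
  intros Dx0 Dx Hne.
  set (m := 1 / 2 * x + (1 - 1 / 2) * x0).
  assert (Hm : f m < 1 / 2 * f x + (1 - 1 / 2) * f x0) by (apply f_convex; auto; lra).
  assert (Htan : f x0 + f' x0 * (m - x0) <= f m)
    by (apply strictly_convex_tangent_le; auto; apply D_segment; auto; lra).
  replace (m - x0) with ((x - x0) / 2) in Htan by (unfold m; field).
  lra.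
Qed.

Lemma increasing_strictly_convex_lt (f_increasing : increasing_on f D) x y :
  D x -> D y -> x < y -> f x < f y.
Proof.
  intros Dx Dy Hxy.
  set (m := 1 / 2 * x + (1 - 1 / 2) * y).
  assert (Dm : D m) by (apply D_segment; auto; lra).
  assert (Hm : f m < 1 / 2 * f x + (1 - 1 / 2) * f y) by (apply f_convex; auto; lra).
  assert (Hxm : f x <= f m) by (apply f_increasing; auto; unfold m; lra).
  lra.
Qed.

End Derivative.

Lemma convex_comb_ge_eq a x x' y y' : 0 < a < 1 -> x <= x' -> y <= y' ->
  a * x' + (1 - a) * y' <= a * x + (1 - a) * y -> x = x' /\ y = y'.
Proof. intros Ha Hx Hy Hle. split; apply Rle_antisym; nra. Qed.

Section WageTheft.

Variables (gamma beta u : R) (eta etap C Cp : R -> R).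
Hypothesis gamma_pos : 0 < gamma.
Hypothesis beta_nonneg : 0 <= beta.
Hypothesis beta_foc : gamma * etap beta = 1.
Hypothesis eta_increasing : increasing_on eta nonneg_half_line.
Hypothesis eta_convex : strictly_convex_on eta nonneg_half_line.
Hypothesis eta_deriv : is_deriv_on eta etap nonneg_half_line.
Hypothesis C_increasing : increasing_on C unit_int.
Hypothesis C_convex : strictly_convex_on C unit_int.
Hypothesis C_deriv : is_deriv_on C Cp unit_int.

Definition theft_gain (b : R) : R := b - gamma * eta b.

Definition net_payoff (w : R) : R := theft_gain (b_star beta w) - w.

Lemma theft_gain_lt_beta b : 0 <= b -> b <> beta -> theft_gain b < theft_gain beta.
Proof.
  intros Hb Hne.
  assert (Htan : eta beta + etap beta * (b - beta) < eta b)
    by (apply (strictly_convex_tangent_lt eta etap nonneg_half_line);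
        auto using segment_closed_nonneg_half_line).
  apply (Rmult_lt_compat_l gamma) in Htan; [| exact gamma_pos].
  replace (gamma * (eta beta + etap beta * (b - beta)))
    with (gamma * eta beta + gamma * etap beta * (b - beta)) in Htan by ring.
  rewrite beta_foc in Htan. unfold theft_gain. lra.
Qed.

Lemma theft_gain_strictly_concave b c t : 0 <= b -> 0 <= c -> b <> c -> 0 < t < 1 ->
  t * theft_gain b + (1 - t) * theft_gain c < theft_gain (t * b + (1 - t) * c).
Proof.
  intros Hb Hc Hne Ht.
  assert (Hconv : eta (t * b + (1 - t) * c) < t * eta b + (1 - t) * eta c)
    by (apply eta_convex; auto).
  unfold theft_gain. nra.
Qed.

Lemma theft_gain_lt_below_beta b c : 0 <= b < c -> c <= beta -> theft_gain b < theft_gain c.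
Proof.
  intros Hbc Hcb. destruct (Req_dec c beta) as [-> | Hne]; [apply theft_gain_lt_beta; lra |].
  set (t := (beta - c) / (beta - b)).
  assert (Ht : t * (beta - b) = beta - c) by (unfold t; field; lra).
  assert (Ht01 : 0 < t < 1) by (split; nra).
  replace c with (t * b + (1 - t) * beta) by nra.
  assert (Hconc := theft_gain_strictly_concave b beta t ltac:(lra) beta_nonneg ltac:(lra) Ht01).
  assert (Hmax := theft_gain_lt_beta b ltac:(lra) ltac:(lra)).
  nra.
Qed.

Lemma theft_gain_le_below_beta b c : 0 <= b <= c -> c <= beta -> theft_gain b <= theft_gain c.
Proof.
  intros Hbc Hcb. destruct (Req_dec b c) as [-> | Hne]; [lra |].
  left; apply theft_gain_lt_below_beta; lra.
Qed.

Lemma theft_gain_lt_b_star b w : 0 <= b <= w -> b <> b_star beta w ->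
  theft_gain b < theft_gain (b_star beta w).
Proof.
  unfold b_star. intros Hb Hne. destruct (Rle_or_lt w beta) as [Hw | Hw].
  - rewrite Rmin_right in * by lra. apply theft_gain_lt_below_beta; lra.
  - rewrite Rmin_left in * by lra. now apply theft_gain_lt_beta.
Qed.

Lemma net_payoff_decreasing w w' : 0 <= w < w' -> net_payoff w' < net_payoff w.
Proof.
  assert (Hbelow : forall x y, 0 <= x < y -> y <= beta -> net_payoff y < net_payoff x).
  { intros x y Hxy Hy. unfold net_payoff, b_star, theft_gain. rewrite !Rmin_right by lra.
    assert (eta x < eta y).
    { apply (increasing_strictly_convex_lt eta nonneg_half_line);
        auto using segment_closed_nonneg_half_line; unfold nonneg_half_line; lra. }
    nra. }
  assert (Habove : forall x y, beta <= x < y -> net_payoff y < net_payoff x)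
    by (intros x y Hxy; unfold net_payoff, b_star; rewrite !Rmin_left by lra; lra).
  intros Hw. destruct (Rle_or_lt w' beta); [now apply Hbelow |].
  destruct (Rle_or_lt beta w); [apply Habove; lra |].
  apply Rlt_trans with (net_payoff beta); [apply Habove | apply Hbelow]; lra.
Qed.

Lemma net_payoff_ge_sub w w' k : 0 <= w -> 0 <= w' -> 0 <= k -> w <= w' + k ->
  net_payoff w' - k <= net_payoff w.
Proof.
  intros Hw Hw' Hk Hwk. destruct (Rlt_or_le w w') as [Hlt | Hle].
  - assert (net_payoff w' < net_payoff w) by (apply net_payoff_decreasing; lra). lra.
  - assert (theft_gain (b_star beta w') <= theft_gain (b_star beta w)).
    { apply theft_gain_le_below_beta; [split | apply Rmin_l].
      - apply Rmin_glb; lra.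
      - apply Rle_min_compat_l; lra. }
    unfold net_payoff. lra.
Qed.

Lemma state_profit_b_star P y w :
  state_profit P y gamma eta w (b_star beta w) = P * y + net_payoff w.
Proof. unfold state_profit, net_payoff, theft_gain. ring. Qed.

Lemma state_profit_lt_net_payoff P y w b : 0 <= b <= w -> b <> b_star beta w ->
  state_profit P y gamma eta w b < P * y + net_payoff w.
Proof.
  intros Hb Hne.
  assert (theft_gain b < theft_gain (b_star beta w)) by (now apply theft_gain_lt_b_star).
  unfold state_profit, net_payoff, theft_gain in *. lra.
Qed.

Lemma state_profit_le_net_payoff P y w b : 0 <= b <= w ->
  state_profit P y gamma eta w b <= P * y + net_payoff w.
Proof.
  intros Hb. destruct (Req_dec b (b_star beta w)) as [-> | Hne].
  - rewrite state_profit_b_star. lra.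
  - left. now apply state_profit_lt_net_payoff.
Qed.

Lemma state_profit_eq_net_payoff P y w b : 0 <= b <= w ->
  state_profit P y gamma eta w b = P * y + net_payoff w -> b = b_star beta w.
Proof.
  intros Hb Heq. destruct (Req_dec b (b_star beta w)) as [-> | Hne]; [reflexivity |].
  assert (Hlt := state_profit_lt_net_payoff P y w b Hb Hne). lra.
Qed.

Lemma Cp_nonneg a : unit_int a -> 0 <= Cp a.
Proof.
  intros [Ha0 Ha1].
  apply (deriv_ge_of_secants_right C Cp unit_int segment_closed_unit_int C_deriv a ((1 + a) / 2));
    [split; lra | split; lra | lra |].
  intros y Hy Hay. assert (C a <= C y) by (apply C_increasing; [split; lra | exact Hy | lra]).
  lra.
Qed.

Lemma incentive_compatible_wage_gap a wH wL : 0 < a < 1 ->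
  (forall a', unit_int a' -> worker_utility C wH wL a' <= worker_utility C wH wL a) ->
  wH - wL = Cp a.
Proof.
  intros Ha Hic. symmetry.
  apply (deriv_eq_of_supporting_line C Cp unit_int segment_closed_unit_int C_deriv
           a 0 ((1 + a) / 2));
    [split | split | split | split |]; try lra.
  intros y Hy. specialize (Hic y Hy). unfold worker_utility in Hic. lra.
Qed.

Lemma wL_star_le_of_participation a wH wL :
  0 <= wL -> wH - wL = Cp a -> u <= worker_utility C wH wL a -> wL_star u C Cp a <= wL.
Proof.
  intros HwL Hgap Hpc. unfold wL_star. apply Rmax_lub; [exact HwL |].
  unfold worker_utility in Hpc. replace wH with (wL + Cp a) in Hpc by lra. lra.
Qed.

Lemma wL_star_le_wL_star_0 a : C 0 = 0 -> unit_int a -> wL_star u C Cp a <= wL_star u C Cp 0.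
Proof.
  intros HC0 Ha.
  assert (Htan : C a + Cp a * (0 - a) <= C 0)
    by (apply (strictly_convex_tangent_le C Cp unit_int); auto using segment_closed_unit_int;
        split; lra).
  unfold wL_star. apply Rle_max_compat_l. lra.
Qed.

Lemma feasible_star a : unit_int a ->
  feasible u C a (wH_star u C Cp a) (wL_star u C Cp a)
    (b_star beta (wH_star u C Cp a)) (b_star beta (wL_star u C Cp a)).
Proof.
  intros Ha.
  assert (HCp := Cp_nonneg a Ha).
  assert (HL0 : 0 <= wL_star u C Cp a) by apply Rmax_l.
  assert (HLu : u - a * Cp a + C a <= wL_star u C Cp a) by apply Rmax_r.
  unfold feasible, worker_utility, wH_star, b_star.
  split; [exact Ha | split].
  - intros a' Ha'.
    assert (C a + Cp a * (a' - a) <= C a')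
      by (apply (strictly_convex_tangent_le C Cp unit_int); auto using segment_closed_unit_int).
    lra.
  - repeat split; try lra; try apply Rmin_r; apply Rmin_glb; lra.
Qed.

Lemma g_fun_net_payoff P yH yL a :
  g_fun P yH yL u gamma beta C Cp eta a =
  a * (P * yH + net_payoff (wH_star u C Cp a)) + (1 - a) * (P * yL + net_payoff (wL_star u C Cp a)).
Proof. unfold g_fun, objective. now rewrite !state_profit_b_star. Qed.

Lemma g_fun_increment_ge P yH yL a : C 0 = 0 -> unit_int a ->
  g_fun P yH yL u gamma beta C Cp eta 0 + a * (P * yH - P * yL - Cp a)
  <= g_fun P yH yL u gamma beta C Cp eta a.
Proof.
  intros HC0 Ha. rewrite !g_fun_net_payoff.
  assert (HCp := Cp_nonneg a Ha).
  assert (HW := wL_star_le_wL_star_0 a HC0 Ha).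
  set (W0 := wL_star u C Cp 0) in *. set (WL := wL_star u C Cp a) in *.
  assert (HW0 : 0 <= W0) by apply Rmax_l.
  assert (HWL : 0 <= WL) by apply Rmax_l.
  assert (HnL : net_payoff W0 - 0 <= net_payoff WL) by (apply net_payoff_ge_sub; lra).
  assert (HnH : net_payoff W0 - Cp a <= net_payoff (wH_star u C Cp a))
    by (apply net_payoff_ge_sub; unfold wH_star; fold WL; lra).
  destruct Ha as [Ha0 Ha1].
  assert (a * (net_payoff W0 - Cp a) <= a * net_payoff (wH_star u C Cp a))
    by (apply Rmult_le_compat_l; lra).
  assert ((1 - a) * net_payoff W0 <= (1 - a) * net_payoff WL) by (apply Rmult_le_compat_l; lra).
  lra.
Qed.

Lemma optimal_effort_pos P yH yL Cpp astar :
  C 0 = 0 -> is_deriv_on Cp Cpp unit_int -> Cp 0 < P * yH - P * yL -> unit_int astar ->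
  (forall a, unit_int a ->
     g_fun P yH yL u gamma beta C Cp eta a <= g_fun P yH yL u gamma beta C Cp eta astar) ->
  0 < astar.
Proof.
  intros HC0 HCp_deriv Hmarg [[Hpos | <-] _] Hmax; [exact Hpos | exfalso].
  destruct (is_deriv_on_continuous Cp Cpp unit_int 0 HCp_deriv (conj (Rle_refl 0) Rlt_0_1)
              (P * yH - P * yL - Cp 0)) as (alp & Halp & Hnear); [lra |].
  set (a := Rmin (alp / 2) (1 / 2)).
  assert (Ha0 : 0 < a) by (apply Rmin_pos; lra).
  assert (Ha1 : a <= 1 / 2) by apply Rmin_r.
  assert (Ha2 : a <= alp / 2) by apply Rmin_l.
  assert (Ua : unit_int a) by (split; lra).
  assert (HCa : Cp a < P * yH - P * yL).
  { assert (Hdist : Rabs (a - 0) < alp) by (rewrite Rabs_right; lra).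
    specialize (Hnear a (conj (conj Ua (Rgt_not_eq a 0 Ha0)) Hdist)).
    simpl in Hnear. unfold Rdist in Hnear. apply Rabs_def2 in Hnear. lra. }
  assert (Hgain := g_fun_increment_ge P yH yL a HC0 Ua).
  assert (0 < a * (P * yH - P * yL - Cp a)) by (apply Rmult_lt_0_compat; lra).
  specialize (Hmax a Ua). lra.
Qed.

Lemma optimal_solution_eq_star P yH yL astar wH wL bH bL : 0 < astar < 1 ->
  optimal_solution P yH yL u gamma C eta astar wH wL bH bL ->
  wH = wH_star u C Cp astar /\ wL = wL_star u C Cp astar /\
  bH = b_star beta (wH_star u C Cp astar) /\ bL = b_star beta (wL_star u C Cp astar).
Proof.
  intros Ha [(Hunit & Hic & Hpc & HwH & HwL & HbL & HbH) Hopt].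
  assert (Hgap : wH - wL = Cp astar) by (now apply incentive_compatible_wage_gap).
  assert (HWL : wL_star u C Cp astar <= wL) by (now apply wL_star_le_of_participation with wH).
  assert (HWL0 : 0 <= wL_star u C Cp astar) by apply Rmax_l.
  assert (HCp := Cp_nonneg astar Hunit).
  assert (HWH : wH_star u C Cp astar = wL_star u C Cp astar + Cp astar) by reflexivity.
  set (WL := wL_star u C Cp astar) in *. set (WH := wH_star u C Cp astar) in *.
  assert (Hstar := Hopt _ _ _ _ _ (feasible_star astar Hunit)).
  unfold objective in Hstar. rewrite !state_profit_b_star in Hstar.
  assert (HsH := state_profit_le_net_payoff P yH wH bH HbH).
  assert (HsL := state_profit_le_net_payoff P yL wL bL HbL).
  assert (HnH : net_payoff wH - 0 <= net_payoff WH) by (apply net_payoff_ge_sub; lra).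
  assert (HnL : net_payoff wL - 0 <= net_payoff WL) by (apply net_payoff_ge_sub; lra).
  destruct (convex_comb_ge_eq astar (state_profit P yH gamma eta wH bH) (P * yH + net_payoff WH)
              (state_profit P yL gamma eta wL bL) (P * yL + net_payoff WL))
    as [EH EL]; [exact Ha | lra | lra | exact Hstar |].
  assert (EwL : wL = WL).
  { destruct HWL as [Hlt | Heq]; [exfalso | now symmetry].
    assert (net_payoff wL < net_payoff WL) by (apply net_payoff_decreasing; lra). lra. }
  assert (EwH : wH = WH) by lra.
  rewrite <- EwH, <- EwL in *.
  repeat split; try reflexivity; eapply state_profit_eq_net_payoff; eauto.
Qed.

End WageTheft.

Theorem corollary1
  (P yH yL u gamma : R) (C Cp Cpp eta etap etapp : R -> R) (beta astar : R)
  (HP : 0 < P) (Hy : yL < yH) (HyL : 0 <= yL)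
  (Hgamma : 0 < gamma <= 1)
  (* effort cost C on [0,1), with derivatives Cp = C', Cpp = C'' *)
  (HC0 : C 0 = 0)
  (HCinc : increasing_on C unit_int)
  (HCconv : strictly_convex_on C unit_int)
  (HCd : is_deriv_on C Cp unit_int)
  (HCdd : is_deriv_on Cp Cpp unit_int)
  (HCinf : tends_to_infty_at_1 C)
  (* penalty eta on [0,oo), with derivatives etap = eta', etapp = eta'' *)
  (Heta0 : eta 0 = 0)
  (Hetainc : increasing_on eta nonneg_half_line)
  (Hetaconv : strictly_convex_on eta nonneg_half_line)
  (Hetad : is_deriv_on eta etap nonneg_half_line)
  (Hetadd : is_deriv_on etap etapp nonneg_half_line)
  (* beta >= 0 with gamma * eta'(beta) = 1 *)
  (Hbeta : 0 <= beta) (Hbeta1 : gamma * etap beta = 1)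
  (* hypothesis of the corollary *)
  (Hmarg : Cp 0 < P * yH - P * yL)
  (* astar is an optimal effort level: a maximizer of g on [0,1) *)
  (Hastar : unit_int astar)
  (Hgmax : forall a, unit_int a ->
     g_fun P yH yL u gamma beta C Cp eta a
     <= g_fun P yH yL u gamma beta C Cp eta astar) :
  forall wH wL bH bL,
    optimal_solution P yH yL u gamma C eta astar wH wL bH bL ->
    wH = wH_star u C Cp astar /\ wL = wL_star u C Cp astar /\
    bH = b_star beta (wH_star u C Cp astar) /\
    bL = b_star beta (wL_star u C Cp astar).
Proof.
  intros wH wL bH bL Hopt.
  assert (Hgamma0 : 0 < gamma) by lra.
  assert (Hpos : 0 < astar) by (eapply (optimal_effort_pos gamma beta u eta etap C Cp); eauto).
  eapply (optimal_solution_eq_star gamma beta u eta etap C Cp); eauto.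
  split; [exact Hpos | apply Hastar].
Qed.
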